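(* Let $\mathbb{K}\in\{\mathbb{R},\mathbb{C}\}$, $\star\in\{*,T\}$, $\epsilon_1,\epsilon_2\in\{1,-1\}$, and let $Q(\lambda)=\lambda^2M+\lambda D+K\in\mathbb{K}^{n\times n}[\lambda]$ satisfy $M^\star=\epsilon_1M$, $D^\star=\epsilon_2D$, $K^\star=\epsilon_1K$. Let $(X,\Lambda)\in\mathbb{K}^{n\times p}\times\mathbb{K}^{p\times p}$ be an invariant pair of $Q(\lambda)$ and $S:=X^\star MX\Lambda+\epsilon_1\epsilon_2\Lambda^\star X^\star MX+X^\star DX$. Then $S^\star=\epsilon_2S$ and $S\Lambda=\epsilon_1\epsilon_2\Lambda^\star S=\epsilon_1(S\Lambda)^\star$.
   Context: For a matrix $A$, $A^*$ is the conjugate transpose and $A^T$ the transpose; $A^\star$ means $A^*$ if $\star=*$ and $A^T$ if $\star=T$. A pair $(X,\Lambda)$ is an invariant pair of $Q(\lambda)$ if $MX\Lambda^2+DX\Lambda+KX=0$. *)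

From HB Require Import structures.
From mathcomp Require Import all_boot all_order all_algebra.
From mathcomp Require Import complex.
Set Implicit Arguments. Unset Strict Implicit. Unset Printing Implicit Defensive.
Import Order.TTheory GRing.Theory Num.Theory.
Local Open Scope ring_scope.

Inductive star_kind := StarConj | StarTr.

(* A^star for a matrix over a ring K equipped with the conjugation [conj]
   ([conj] = id for K = R, [conj] = complex conjugation for K = R[i]). *)
Definition mxstar (K : Type) (conj : K -> K) (s : star_kind) (m n : nat)
  (A : 'M[K]_(m, n)) : 'M[K]_(n, m) :=
  match s with
  | StarConj => map_mx conj A^T
  | StarTr => A^T
  end.

Definition invariant_pair (K : pzRingType) (n p : nat)
  (M D Kc : 'M[K]_n) (X : 'M[K]_(n, p)) (L : 'M[K]_p) : Prop :=
  M *m X *m (L *m L) + D *m X *m L + Kc *m X = 0.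

Definition Smx (K : pzRingType) (conj : K -> K) (s : star_kind) (e1 e2 : K)
  (n p : nat) (M D : 'M[K]_n) (X : 'M[K]_(n, p)) (L : 'M[K]_p) : 'M[K]_p :=
  mxstar conj s X *m M *m X *m L
  + (e1 * e2) *: (mxstar conj s L *m mxstar conj s X *m M *m X)
  + mxstar conj s X *m D *m X.

From HB Require Import structures.
From mathcomp Require Import all_boot all_order all_algebra.
From mathcomp Require Import complex.
Set Implicit Arguments. Unset Strict Implicit.
Import Order.TTheory GRing.Theory Num.Theory.
Local Open Scope ring_scope.

(* Multiplying the invariant-pair equation on the left by X^star turns it into
   A L^2 + B L + C = 0 with A = X^star M X, B = X^star D X, C = X^star K X,
   which inherit the e1-, e2- and e1-symmetry of M, D and K.  The symmetry of
   S = A L + e1 e2 L^star A + B is then a direct computation, and S L and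
   e1 e2 L^star S both equal e1 e2 L^star A L - C: the first by the compressed
   equation, the second by its star-transform
   L^star L^star A + e1 e2 L^star B + C = 0. *)

Section MatrixStar.

Variables (K : comPzRingType) (conj : {rmorphism K -> K}).
Hypothesis conjK : involutive conj.
Variable s : star_kind.

Local Notation "A ^star" := (mxstar conj s A) (at level 8, format "A ^star").

Lemma mxstarM m n q (A : 'M[K]_(m, n)) (B : 'M[K]_(n, q)) :
  (A *m B)^star = B^star *m A^star.
Proof. by case: s => /=; rewrite trmx_mul // map_mxM. Qed.

Lemma mxstarD m n (A B : 'M[K]_(m, n)) : (A + B)^star = A^star + B^star.
Proof. by case: s => /=; rewrite linearD // map_mxD. Qed.

Lemma mxstar0 m n : (0 : 'M[K]_(m, n))^star = 0.
Proof. by case: s; apply/matrixP => i j; rewrite !mxE ?rmorph0. Qed.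

Lemma mxstarZ m n a (A : 'M[K]_(m, n)) :
  conj a = a -> (a *: A)^star = a *: A^star.
Proof. by case: s => /= conj_a; rewrite linearZ // map_mxZ conj_a. Qed.

Lemma mxstarK m n (A : 'M[K]_(m, n)) : A^star^star = A.
Proof.
case: s => /=; last exact: trmxK.
by rewrite map_trmx trmxK -map_mx_comp map_mx_id.
Qed.

Lemma mxstar_congr e n p (M : 'M[K]_n) (X : 'M[K]_(n, p)) :
  M^star = e *: M -> (X^star *m M *m X)^star = e *: (X^star *m M *m X).
Proof.
by move=> starM; rewrite !mxstarM mxstarK starM -scalemxAl -scalemxAr mulmxA.
Qed.

Lemma conj_sign {e : K} : e = 1 \/ e = -1 -> conj e = e.
Proof. by case=> ->; rewrite ?rmorphN rmorph1. Qed.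

Lemma mul_sign {e : K} : e = 1 \/ e = -1 -> e * e = 1.
Proof. by case=> ->; rewrite ?mulrNN mulr1. Qed.

Section QuadraticMatrixEquation.

Variables (e1 e2 : K) (p : nat) (A B C L : 'M[K]_p).
Hypotheses (e1_sign : e1 = 1 \/ e1 = -1) (e2_sign : e2 = 1 \/ e2 = -1).
Hypotheses (starA : A^star = e1 *: A) (starB : B^star = e2 *: B)
           (starC : C^star = e1 *: C).
Hypothesis quadratic_eq : A *m L *m L + B *m L + C = 0.

Let S := A *m L + (e1 * e2) *: (L^star *m A) + B.

Lemma star_quadratic_eq :
  L^star *m L^star *m A + (e1 * e2) *: (L^star *m B) + C = 0.
Proof.
have /(congr1 (@mxstar K conj s p p)) := quadratic_eq.
rewrite !mxstarD !mxstarM mxstar0 starA starB starC => /(congr1 ( *:%R e1)).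
rewrite -!scalemxAr !scalerDr !scalerA (mul_sign e1_sign) !scale1r scaler0.
by rewrite !mulmxA.
Qed.

Lemma quadratic_S_sym : S^star = e2 *: S.
Proof.
have conj_e : conj (e1 * e2) = e1 * e2.
  by rewrite rmorphM (conj_sign e1_sign) (conj_sign e2_sign).
rewrite /S !mxstarD mxstarZ // !mxstarM mxstarK starA starB.
rewrite -!scalemxAl -!scalemxAr !scalerDr !scalerA.
rewrite mulrAC (mul_sign e1_sign) mul1r mulrCA (mul_sign e2_sign) mulr1.
by rewrite [X in X + _]addrC.
Qed.

Lemma quadratic_S_mulL : S *m L = (e1 * e2) *: (L^star *m S).
Proof.
have sign_e : (e1 * e2) * (e1 * e2) = 1.
  by rewrite mulrACA (mul_sign e1_sign) (mul_sign e2_sign) mulr1.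
have /addr0_eq quadratic_eqC : C + (A *m L *m L + B *m L) = 0.
  by rewrite addrC quadratic_eq.
have /addr0_eq star_quadratic_eqC :
    C + (L^star *m L^star *m A + (e1 * e2) *: (L^star *m B)) = 0.
  by rewrite addrC star_quadratic_eq.
have SL : S *m L = (e1 * e2) *: (L^star *m A *m L) - C.
  by rewrite /S !mulmxDl -scalemxAl addrAC -quadratic_eqC addrC.
rewrite SL /S !mulmxDr -!scalemxAr !scalerDr scalerA sign_e scale1r !mulmxA.
by rewrite -addrA -star_quadratic_eqC.
Qed.

End QuadraticMatrixEquation.

Lemma invariant_pair_Smx (e1 e2 : K) n p (M D Kc : 'M[K]_n) (X : 'M[K]_(n, p))
    (L : 'M[K]_p) :
  (e1 = 1 \/ e1 = -1) -> (e2 = 1 \/ e2 = -1) ->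
  M^star = e1 *: M -> D^star = e2 *: D -> Kc^star = e1 *: Kc ->
  invariant_pair M D Kc X L ->
  let S := Smx conj s e1 e2 M D X L in
  S^star = e2 *: S /\
  S *m L = (e1 * e2) *: (L^star *m S) /\
  (e1 * e2) *: (L^star *m S) = e1 *: (S *m L)^star.
Proof.
move=> e1_sign e2_sign starM starD starK inv S.
have quadratic_eq : (X^star *m M *m X) *m L *m L + (X^star *m D *m X) *m L
                    + X^star *m Kc *m X = 0.
  by have /(congr1 (mulmx X^star)) := inv; rewrite mulmx0 !mulmxDr !mulmxA.
have defS : S = X^star *m M *m X *m L
    + (e1 * e2) *: (L^star *m (X^star *m M *m X)) + X^star *m D *m X.
  by rewrite /S /Smx !mulmxA.
have starA := mxstar_congr X starM.
have starB := mxstar_congr X starD.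
have starC := mxstar_congr X starK.
have symS : S^star = e2 *: S by rewrite defS quadratic_S_sym.
split=> //; split.
  by rewrite defS (quadratic_S_mulL e1_sign e2_sign starA starB starC).
by rewrite mxstarM symS -scalemxAr scalerA.
Qed.

End MatrixStar.

Theorem corollary2p3 (R : rcfType) :
  (forall (s : star_kind) (e1 e2 : R) (n p : nat)
     (M D Kc : 'M[R]_n) (X : 'M[R]_(n, p)) (L : 'M[R]_p),
     (e1 = 1 \/ e1 = -1) -> (e2 = 1 \/ e2 = -1) ->
     mxstar id s M = e1 *: M -> mxstar id s D = e2 *: D ->
     mxstar id s Kc = e1 *: Kc ->
     invariant_pair M D Kc X L ->
     let S := Smx id s e1 e2 M D X L in
     mxstar id s S = e2 *: S /\
     S *m L = (e1 * e2) *: (mxstar id s L *m S) /\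
     (e1 * e2) *: (mxstar id s L *m S) = e1 *: mxstar id s (S *m L))
  /\
  (forall (s : star_kind) (e1 e2 : R[i]) (n p : nat)
     (M D Kc : 'M[R[i]]_n) (X : 'M[R[i]]_(n, p)) (L : 'M[R[i]]_p),
     (e1 = 1 \/ e1 = -1) -> (e2 = 1 \/ e2 = -1) ->
     mxstar conjc s M = e1 *: M -> mxstar conjc s D = e2 *: D ->
     mxstar conjc s Kc = e1 *: Kc ->
     invariant_pair M D Kc X L ->
     let S := Smx conjc s e1 e2 M D X L in
     mxstar conjc s S = e2 *: S /\
     S *m L = (e1 * e2) *: (mxstar conjc s L *m S) /\
     (e1 * e2) *: (mxstar conjc s L *m S) = e1 *: mxstar conjc s (S *m L)).
Proof.
split=> s; first exact: (@invariant_pair_Smx R idfun (fun _ => erefl)).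
exact: (@invariant_pair_Smx R[i] conjc (@conjcK R)).
Qed.
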